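(* Let $V = k[[t]]$ be the formal power series ring over a field $k$, and set $R = k[[t^3, t^8, t^{13}]]$ and $S = k[[t^3, t^5]]$, subrings of $V$. Then $R$ is strictly closed in $S$, but $R$ is not strictly closed in $V$.
   Context: For an extension of commutative rings $R \subseteq S$, the strict closure of $R$ in $S$ is $R^* = \{\alpha \in S \mid \alpha\otimes 1 = 1\otimes \alpha \text{ in } S\otimes_R S\}$; $R$ is strictly closed in $S$ if $R=R^*$. *)

From HB Require Import structures.
From mathcomp Require Import all_boot all_order all_algebra.
Set Implicit Arguments. Unset Strict Implicit. Unset Printing Implicit Defensive.
Import GRing.Theory.
Local Open Scope ring_scope.

(* Formal power series k[[t]] over k, represented by their coefficient
   sequences: f n = coefficient of t^n. *)
Definition pseries (k : fieldType) := nat -> k.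

Definition ps_add (k : fieldType) (f g : pseries k) : pseries k :=
  fun n => f n + g n.

Definition ps_mul (k : fieldType) (f g : pseries k) : pseries k :=
  fun n => \sum_(i < n.+1) f i * g (n - i)%N.

Definition ps_one (k : fieldType) : pseries k :=
  fun n => if n == 0%N then 1 else 0.

Fixpoint in_numsg (gens : seq nat) (n : nat) : Prop :=
  match gens with
  | [::] => n = 0%N
  | g :: gs => exists a : nat, (a * g <= n)%N /\ in_numsg gs (n - a * g)%N
  end.

(* The subring k[[t^g1, ..., t^gm]] of k[[t]]: the power series all of whose
   exponents lie in the numerical semigroup generated by g1, ..., gm. *)
Definition monomial_subring (k : fieldType) (gens : seq nat) (f : pseries k)
  : Prop := forall n, f n != 0 -> in_numsg gens n.

Definition balanced (k : fieldType) (R S : pseries k -> Prop)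
  (A : zmodType) (f : pseries k -> pseries k -> A) : Prop :=
  [/\ forall x x' y, S x -> S x' -> S y ->
        f (ps_add x x') y = f x y + f x' y,
      forall x y y', S x -> S y -> S y' ->
        f x (ps_add y y') = f x y + f x y' &
      forall r x y, R r -> S x -> S y ->
        f (ps_mul r x) y = f x (ps_mul r y)].

(* x (x) y = x' (x) y' in S (x)_R S, via the universal property of the
   tensor product (elements of S (x)_R S are equal iff every R-balanced
   biadditive map to an abelian group identifies them). *)
Definition tensor_eq (k : fieldType) (R S : pseries k -> Prop)
  (x y x' y' : pseries k) : Prop :=
  forall (A : zmodType) (f : pseries k -> pseries k -> A),
    balanced R S f -> f x y = f x' y'.

Definition strict_closure (k : fieldType) (R S : pseries k -> Prop)
  (a : pseries k) : Prop :=
  S a /\ tensor_eq R S a (ps_one k) (ps_one k) a.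

Definition strictly_closed (k : fieldType) (R S : pseries k -> Prop) : Prop :=
  forall a, strict_closure R S a <-> R a.

From mathcomp Require Import all_boot all_order all_algebra.
From mathcomp Require Import zify.
From Stdlib Require Import FunctionalExtensionality.
Set Implicit Arguments. Unset Strict Implicit. Unset Printing Implicit Defensive.
Import GRing.Theory.
Local Open Scope ring_scope.

(* In S = k[[t^3, t^5]] the exponents 5 and 10 are exactly those missing from
   R = k[[t^3, t^8, t^13]], and neither is the sum of a positive element of
   <3, 8, 13> and an element of <3, 5>.  Hence for r in R and x in S the
   coefficient of t^m (m = 0, 5, 10) in r x is r_0 x_m, so (x, y) |-> x_m y_0
   is R-balanced on S; it sends a (x) 1 to a_m and 1 (x) a to 0, so every
   element of the strict closure of R in S has a_5 = a_10 = 0 and lies in R.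
   In V = k[[t]], using t^6, t^8 in R,
   t^10 (x) 1 = t^2 (x) t^8 = t^8 (x) t^2 = 1 (x) t^10, although t^10 is not
   in R. *)

Lemma in_numsg0 gens : in_numsg gens 0.
Proof. by elim: gens => [|g gs IH] //=; exists 0%N. Qed.

Lemma in_numsg_cons g gs a m :
  in_numsg gs m -> in_numsg (g :: gs) (a * g + m).
Proof. by exists a; rewrite leq_addr addKn. Qed.

Lemma in_numsg_3_5 n : in_numsg [:: 3; 5] n <-> n \notin [:: 1; 2; 4; 7].
Proof.
rewrite !inE; split=> [/= [a [? [b [? ?]]]] | n_ok]; first lia.
have n_eq := divn_eq n 3; have := ltn_pmod n (isT : 0 < 3)%N.
case: (n %% 3)%N n_eq => [|[|[|//]]] n_eq _.
- rewrite (_ : n = n %/ 3 * 3 + (0 * 5 + 0))%N; last lia.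
  by do 2 apply: in_numsg_cons.
- rewrite (_ : n = (n %/ 3 - 3) * 3 + (2 * 5 + 0))%N; last lia.
  by do 2 apply: in_numsg_cons.
- rewrite (_ : n = (n %/ 3 - 1) * 3 + (1 * 5 + 0))%N; last lia.
  by do 2 apply: in_numsg_cons.
Qed.

Lemma in_numsg_3_8_13 n :
  in_numsg [:: 3; 8; 13] n <-> n \notin [:: 1; 2; 4; 5; 7; 10].
Proof.
rewrite !inE; split=> [/= [a [? [b [? [c [? ?]]]]]] | n_ok]; first lia.
have n_eq := divn_eq n 3; have := ltn_pmod n (isT : 0 < 3)%N.
case: (n %% 3)%N n_eq => [|[|[|//]]] n_eq _.
- rewrite (_ : n = n %/ 3 * 3 + (0 * 8 + (0 * 13 + 0)))%N; last lia.
  by do 3 apply: in_numsg_cons.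
- rewrite (_ : n = (n %/ 3 - 4) * 3 + (0 * 8 + (1 * 13 + 0)))%N; last lia.
  by do 3 apply: in_numsg_cons.
- rewrite (_ : n = (n %/ 3 - 2) * 3 + (1 * 8 + (0 * 13 + 0)))%N; last lia.
  by do 3 apply: in_numsg_cons.
Qed.

Definition indecomposable (G H : seq nat) (m : nat) : Prop :=
  forall i, (0 < i <= m)%N -> in_numsg G i -> in_numsg H (m - i) -> False.

Lemma indecomposable0 G H : indecomposable G H 0.
Proof. by move=> i; rewrite ltnNge andNb. Qed.

Lemma indecomposable_3_8_13_3_5 m : m \in [:: 5; 10] ->
  indecomposable [:: 3; 8; 13] [:: 3; 5] m.
Proof.
move=> m_gap i i_range /in_numsg_3_8_13 Ri /in_numsg_3_5 Si.
by rewrite !inE in m_gap Ri Si; lia.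
Qed.

Section PowerSeries.

Variable k : fieldType.

Definition mono (j : nat) : pseries k := fun n => if n == j then 1 else 0.

Lemma ps_one_mono : ps_one k = mono 0.
Proof. by []. Qed.

Lemma ps_mul_monoE i (g : pseries k) n :
  ps_mul (mono i) g n = if (i <= n)%N then g (n - i)%N else 0.
Proof.
rewrite /ps_mul /mono; case: leqP => [le_in | lt_ni].
  rewrite (bigD1 (Ordinal (le_in : (i < n.+1)%N))) //= eqxx mul1r.
  by rewrite big1 ?addr0 // => l ne_li; rewrite ifN ?mul0r.
rewrite big1 // => l _; rewrite ifN ?mul0r //.
by have := ltn_ord l; apply: contraTN => /eqP ->; rewrite ltnS -ltnNge.
Qed.

Lemma ps_mul_mono i j : ps_mul (mono i) (mono j) = mono (i + j).
Proof.
apply: functional_extensionality => n; rewrite ps_mul_monoE /mono.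
by case: leqP; case: (n =P i + j)%N; case: (n - i =P j)%N => //; lia.
Qed.

Lemma ps_mulr1 (f : pseries k) : ps_mul f (ps_one k) = f.
Proof.
apply: functional_extensionality => n; rewrite /ps_mul big_ord_recr /=.
rewrite subnn /ps_one eqxx mulr1 big1 ?add0r // => i _.
by rewrite ifN ?mulr0 // subn_eq0 -ltnNge ltn_ord.
Qed.

Lemma strict_closure_id (R S : pseries k -> Prop) a :
  (forall r, R r -> S r) -> S (ps_one k) -> R a -> strict_closure R S a.
Proof.
move=> sRS S1 Ra; split; first exact: sRS.
move=> A f [_ _ fR]; rewrite -{1}(ps_mulr1 a) fR ?ps_mulr1 //; exact: sRS.
Qed.

Lemma mono_strict_closure (R : pseries k -> Prop) c d :
  R (mono d) -> R (mono (d + c)) ->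
  strict_closure R (fun _ => True) (mono (d + c + c)).
Proof.
move=> Rd Rdc; split=> // A f [_ _ fR].
rewrite ps_one_mono.
have -> : f (mono (d + c + c)) (mono 0) = f (mono c) (mono (d + c)).
  by rewrite -(ps_mul_mono (d + c) c) fR // ps_mul_mono addn0.
have -> : f (mono c) (mono (d + c)) = f (mono (d + c)) (mono c).
  by rewrite -(ps_mul_mono d c) fR.
by rewrite -(ps_mul_mono (d + c) c) -fR // ps_mul_mono addn0.
Qed.

Lemma monomial_subring_mono gens j :
  monomial_subring gens (mono j) <-> in_numsg gens j.
Proof.
split=> [/(_ j) | Gj n]; first by rewrite /mono eqxx oner_eq0; apply.
by rewrite /mono; case: (n =P j) => [-> | _]; rewrite ?eqxx.
Qed.

Lemma monomial_subring_one gens : monomial_subring gens (ps_one k).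
Proof. by rewrite ps_one_mono; apply/monomial_subring_mono/in_numsg0. Qed.

Lemma monomial_subringS (G H : seq nat) (f : pseries k) :
  (forall n, in_numsg G n -> in_numsg H n) ->
  monomial_subring G f -> monomial_subring H f.
Proof. by move=> sGH Gf n /Gf /sGH. Qed.

Lemma ps_mul_indecomposable G H (r x : pseries k) m :
  monomial_subring G r -> monomial_subring H x -> indecomposable G H m ->
  ps_mul r x m = r 0%N * x m.
Proof.
move=> Gr Hx indm; rewrite /ps_mul big_ord_recl subn0 big1 ?addr0 // => i _.
have i_range : (0 < bump 0 i <= m)%N by rewrite /bump /= add1n ltn_ord.
have [ri0 | /Gr Gi] := eqVneq (r (bump 0 i)) 0; first by rewrite ri0 mul0r.
have [xi0 | /Hx Hi] := eqVneq (x (m - bump 0 i)%N) 0.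
  by rewrite xi0 mulr0.
by case: (indm _ i_range Gi Hi).
Qed.

Definition coef_tensor (m : nat) (x y : pseries k) : k := x m * y 0%N.

Lemma balanced_coef_tensor G H m : indecomposable G H m ->
  balanced (monomial_subring G) (monomial_subring H) (coef_tensor m).
Proof.
move=> indm; split=> [x x' y _ _ _ | x y y' _ _ _ | r x y Gr Hx Hy].
- by rewrite /coef_tensor /ps_add mulrDl.
- by rewrite /coef_tensor /ps_add mulrDr.
rewrite /coef_tensor (ps_mul_indecomposable Gr Hx indm).
by rewrite (ps_mul_indecomposable Gr Hy (@indecomposable0 G H)) mulrCA mulrA.
Qed.

Lemma strict_closure_coef G H (a : pseries k) m :
  strict_closure (monomial_subring G) (monomial_subring H) a ->
  m != 0%N -> indecomposable G H m -> a m = 0.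
Proof.
move=> [_ a_closure] m_neq0 /balanced_coef_tensor /a_closure.
by rewrite /coef_tensor /ps_one eqxx (negbTE m_neq0) mulr1 mul0r.
Qed.

End PowerSeries.

Lemma strict_closure_3_8_13_in_3_5 (k : fieldType) (a : pseries k) :
  strict_closure (monomial_subring [:: 3; 8; 13])
                 (monomial_subring [:: 3; 5]) a ->
  monomial_subring [:: 3; 8; 13] a.
Proof.
move=> a_closure n an_neq0; apply/in_numsg_3_8_13.
have a_gap m : m \in [:: 5; 10] -> a m = 0.
  move=> m_gap; apply: (strict_closure_coef a_closure _
                          (indecomposable_3_8_13_3_5 m_gap)).
  by apply: contraTneq m_gap => ->.
have n_gap : n \notin [:: 5; 10] by apply: contra an_neq0 => /a_gap ->.
have /in_numsg_3_5 := a_closure.1 n an_neq0.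
by rewrite !inE in n_gap *; lia.
Qed.

Theorem mainTheorem5 (k : fieldType) :
  strictly_closed (@monomial_subring k [:: 3; 8; 13]%N)
                  (@monomial_subring k [:: 3; 5]%N)
  /\ ~ strictly_closed (@monomial_subring k [:: 3; 8; 13]%N)
                       (fun _ : pseries k => True).
Proof.
split=> [a | closedRV].
  split=> [/strict_closure_3_8_13_in_3_5 // | Ra].
  apply: strict_closure_id Ra => [r|]; last exact: monomial_subring_one.
  apply: monomial_subringS => n.
  by rewrite in_numsg_3_8_13 in_numsg_3_5 !inE; lia.
have : monomial_subring [:: 3; 8; 13] (mono k (6 + 2 + 2)).
  by apply/closedRV/mono_strict_closure;
    apply/monomial_subring_mono/in_numsg_3_8_13.
by move/monomial_subring_mono/in_numsg_3_8_13.
Qed.
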